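(* Let $m$ be a positive integer, $\tau=\sigma/m$, and consider the explicit Euler scheme $$S^{n+1} = S^n - \tau\, S^n\circ T^{n-m} - c\tau S^n,\qquad I^{n+1} = I^n + \tau\, S^n\circ T^{n-m} - b\tau I^n,\qquad R^{n+1} = R^n + b\tau I^n + c\tau S^n,$$ for $0\le n\le m\mathcal{T}/\sigma$, where for $-m\le n\le 0$ the matrices $S^n,I^n,R^n$ are the history functions evaluated on the grids $\mathcal{G}$ and $\mathcal{G}_t$. Suppose the discretized history values satisfy $D_1$–$D_4$. Then $D_2$ holds for the scheme without any restriction on $\tau$. Furthermore, if $$\tau=\frac{\sigma}{m}\le \min\left\{\frac{1}{\bar T + c},\ \frac{1}{b}\right\},\qquad \bar T=\max_{(x_k,y_l)\in\mathcal{G}} M\sum_{i=1}^p w_i\,W(x_k+\eta_i,y_l+\xi_i),$$ $$M=\max_{(x_k,y_l)\in\mathcal{G}}\{S(0,x_k,y_l)+I(0,x_k,y_l)+R(0,x_k,y_l)\},$$ then $D_1$, $D_3$ and $D_4$ also hold up to step $n\le m\mathcal{T}/\sigma$.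
   Context: $\Omega=(0,A)\times(0,B)$; spatial grid $\mathcal{G}=\{(x_k,y_l): x_k=(k-1)h_x,\ y_l=(l-1)h_y,\ 1\le k\le K,\ 1\le l\le L\}$ with $(K-1)h_x=A$, $(L-1)h_y=B$. Time grid $\mathcal{G}_t=\{t_n=n\sigma/m:\ -m\le n\le m\mathcal{T}/\sigma\}$. Constants $b,c,\sigma,\delta,\mathcal{T}>0$. $W\ge0$ is continuous and bounded. Cubature points $(x+\eta_i,y+\xi_i)$ in the open disc of radius $\delta$ around $(x,y)$, $i=1,\dots,p$, with weights $w_i>0$. For $X\in\{S,I,R\}$, $X^n$ is the $K\times L$ matrix whose $(k,l)$ entry approximates the value at $(x_k,y_l)$ and time $t_n$; $\circ$ is the entrywise (Hadamard) product. $T^{n-m}$ is the matrix with entries $T^{n-m}_{k,l}=\sum_{i=1}^p w_i W(x_k+\eta_i,y_l+\xi_i)\,\hat I^{n-m}(x_k+\eta_i,y_l+\xi_i)$, where $\hat I^{n-m}$ is obtained from the entries of $I^{n-m}$ (taken as zero outside $\Omega$) by a fixed interpolation which, for non-negative grid data, produces values between $0$ and the maximum of the grid data. Discrete properties: $D_1$: all entries of $S^n,I^n,R^n$ are non-negative; $D_2$: $S^n_{k,l}+I^n_{k,l}+R^n_{k,l}$ is independent of $n$ for every $(k,l)$; $D_3$: $S^{n+1}_{k,l}\le S^n_{k,l}$; $D_4$: $R^{n+1}_{k,l}\ge R^n_{k,l}$. *)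

From HB Require Import structures.
From mathcomp Require Import all_boot all_order all_algebra.
From mathcomp Require Import reals topology normedtype.
Set Implicit Arguments. Unset Strict Implicit. Unset Printing Implicit Defensive.
Import Order.TTheory GRing.Theory Num.Theory.
Local Open Scope ring_scope.

Section Defs.
Variable R : realType.

(* Grid points, 0-based: x_k = k * hx  (paper: x_k = (k-1) h_x, 1 <= k <= K). *)
Definition gx (hx : R) (K : nat) (k : 'I_K) : R := (k : nat)%:R * hx.
Definition gy (hy : R) (L : nat) (l : 'I_L) : R := (l : nat)%:R * hy.

Definition Tmat (K L p : nat) (hx hy : R) (w eta xi : 'I_p -> R)
  (W : R -> R -> R) (interp : ('I_K -> 'I_L -> R) -> R -> R -> R)
  (Id : 'I_K -> 'I_L -> R) (k : 'I_K) (l : 'I_L) : R :=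
  \sum_(i < p) w i * W (gx hx k + eta i) (gy hy l + xi i)
               * interp Id (gx hx k + eta i) (gy hy l + xi i).

(* Maximum of grid data (all data considered here are >= 0; default 0). *)
Definition gridmax (K L : nat) (f : 'I_K -> 'I_L -> R) : R :=
  \big[Num.max/0]_(k < K) \big[Num.max/0]_(l < L) f k l.

Definition Mmax (K L : nat) (hx hy : R) (S0 I0 R0 : R -> R -> R -> R) : R :=
  gridmax (fun (k : 'I_K) (l : 'I_L) =>
    S0 0 (gx hx k) (gy hy l) + I0 0 (gx hx k) (gy hy l) + R0 0 (gx hx k) (gy hy l)).

Definition Tbar (K L p : nat) (hx hy : R) (w eta xi : 'I_p -> R)
  (W : R -> R -> R) (M : R) : R :=
  gridmax (fun (k : 'I_K) (l : 'I_L) =>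
    M * \sum_(i < p) w i * W (gx hx k + eta i) (gy hy l + xi i)).

(* Admissible time indices: -m <= n and n-1 <= m T / sigma
   (history indices -m..0 and computed indices up to the last scheme step). *)
Definition valid_idx (m : nat) (sigma Tf : R) (n : int) : Prop :=
  (- (m%:Z) <= n)%R /\ (n - 1)%:~R <= m%:R * Tf / sigma.

(* Indices n at which a time step n -> n+1 is taken (history or scheme). *)
Definition step_idx (m : nat) (sigma Tf : R) (n : int) : Prop :=
  (- (m%:Z) <= n)%R /\ n%:~R <= m%:R * Tf / sigma.

End Defs.

From HB Require Import structures.
From mathcomp Require Import all_boot all_order all_algebra.
From mathcomp Require Import reals topology normedtype.
From mathcomp Require Import lra ring zify.
Set Implicit Arguments. Unset Strict Implicit. Unset Printing Implicit Defensive.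
Import Order.TTheory GRing.Theory Num.Theory numFieldNormedType.Exports.
Local Open Scope ring_scope.

(* The update of (S, I, R) only moves mass between the three compartments, so
   S + I + R is conserved by every step.  Positivity is proved by strong
   induction in time: if all earlier values are non-negative, then by
   conservation I^(n-m) <= S^0 + I^0 + R^0 <= M, so the delayed force of
   infection T^(n-m) lies in [0, Tbar]; the step-size restriction then makes
   each update a combination of non-negative terms.  Monotonicity of S and R
   follows at once from positivity. *)

Section GridMax.
Variables (R : realType) (K L : nat).

Lemma le_gridmax (f : 'I_K -> 'I_L -> R) k l : f k l <= gridmax f.
Proof. by apply: le_trans (le_bigmax _ _ k); apply: le_bigmax. Qed.

Lemma gridmax_le (f : 'I_K -> 'I_L -> R) M :
  0 <= M -> (forall k l, f k l <= M) -> gridmax f <= M.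
Proof. by move=> M0 fM; apply: bigmax_le => // k _; apply: bigmax_le. Qed.

Lemma gridmax_ge0 (f : 'I_K -> 'I_L -> R) : 0 <= gridmax f.
Proof. by rewrite /gridmax; elim/big_rec: _ => // i x _ x0; rewrite le_max x0 orbT. Qed.

End GridMax.

Section CubatureBounds.
Variables (R : realType) (K L p : nat) (hx hy M : R).
Variables (w eta xi : 'I_p -> R) (W : R -> R -> R).
Variable interp : ('I_K -> 'I_L -> R) -> R -> R -> R.
Hypothesis w_gt0 : forall i, 0 < w i.
Hypothesis W_ge0 : forall x y, 0 <= W x y.
Hypothesis interp_bounds : forall f : 'I_K -> 'I_L -> R, (forall k l, 0 <= f k l) ->
  forall x y, 0 <= interp f x y /\ interp f x y <= gridmax f.

Lemma Tmat_ge0 f : (forall k l, 0 <= f k l) ->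
  forall k l, 0 <= Tmat hx hy w eta xi W interp f k l.
Proof.
move=> f0 k l; apply: sumr_ge0 => i _.
by rewrite !mulr_ge0 ?(ltW (w_gt0 i)) // (interp_bounds f0 _ _).1.
Qed.

Lemma Tmat_le_Tbar f : 0 <= M -> (forall k l, 0 <= f k l <= M) ->
  forall k l, Tmat hx hy w eta xi W interp f k l <= Tbar K L hx hy w eta xi W M.
Proof.
move=> M0 fM k l.
have f0 k' l' : 0 <= f k' l' by case/andP: (fM k' l').
have maxf : gridmax f <= M by apply: gridmax_le => // k' l'; case/andP: (fM k' l').
apply: le_trans (le_gridmax (fun (k : 'I_K) (l : 'I_L) =>
  M * \sum_(i < p) w i * W (gx hx k + eta i) (gy hy l + xi i)) k l).
rewrite /Tmat mulr_sumr; apply: ler_sum => i _; rewrite [M * _]mulrC.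
apply: ler_wpM2l; first by rewrite mulr_ge0 ?(ltW (w_gt0 i)).
exact: le_trans (interp_bounds f0 _ _).2 maxf.
Qed.

End CubatureBounds.

Section EulerStep.
Variables (R : realType) (b c tau Tb T s i r : R).
Hypotheses (tau0 : 0 <= tau) (b0 : 0 <= b) (c0 : 0 <= c).
Hypotheses (T0 : 0 <= T) (s0 : 0 <= s) (i0 : 0 <= i).

Lemma euler_step_nonneg : T <= Tb -> tau * (Tb + c) <= 1 -> tau * b <= 1 -> 0 <= r ->
  [/\ 0 <= s - tau * (s * T) - c * tau * s,
      0 <= i + tau * (s * T) - b * tau * i &
      0 <= r + b * tau * i + c * tau * s].
Proof.
move=> TTb tauTc taub r0.
have hs1 : 0 <= s * (1 - tau * (Tb + c)) by rewrite mulr_ge0 // subr_ge0.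
have hs2 : 0 <= s * (tau * (Tb - T)) by rewrite !mulr_ge0 // subr_ge0.
have hi1 : 0 <= i * (1 - tau * b) by rewrite mulr_ge0 // subr_ge0.
have hi2 : 0 <= tau * (s * T) by rewrite !mulr_ge0.
have hr1 : 0 <= b * tau * i by rewrite !mulr_ge0.
have hr2 : 0 <= c * tau * s by rewrite !mulr_ge0.
split; lra.
Qed.

Lemma euler_step_monotone :
  s - tau * (s * T) - c * tau * s <= s /\ r <= r + b * tau * i + c * tau * s.
Proof.
have h1 : 0 <= tau * (s * T) by rewrite !mulr_ge0.
have h2 : 0 <= c * tau * s by rewrite !mulr_ge0.
have h3 : 0 <= b * tau * i by rewrite !mulr_ge0.
split; lra.
Qed.

End EulerStep.

Section TimeIndices.
Variables (R : realType) (m : nat) (sigma Tf : R).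

Lemma valid_idx_ind (P : int -> Prop) :
  (forall j : int, (- (m%:Z) <= j)%R -> (j <= 0)%R -> P j) ->
  (forall n : nat, n%:R <= m%:R * Tf / sigma ->
     (forall j : int, (- (m%:Z) <= j)%R -> (j <= n)%R -> P j) -> P (n%:Z + 1)) ->
  forall j, valid_idx m sigma Tf j -> P j.
Proof.
move=> Phist Pstep.
have upto (n : nat) : (n%:Z - 1)%:~R <= m%:R * Tf / sigma ->
    forall j : int, (- (m%:Z) <= j)%R -> (j <= n)%R -> P j.
  elim: n => [|n IH] hn j jm jn; first exact: Phist.
  have hn' : n%:R <= m%:R * Tf / sigma by move: hn; rewrite -addn1 PoszD addrK.
  have IH' : forall j : int, (- (m%:Z) <= j)%R -> (j <= n)%R -> P j.
    by apply: IH; apply: le_trans hn'; rewrite pmulrn ler_int; lia.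
  have [jn'|jn'] := boolP (j <= n)%R; first exact: IH'.
  suff -> : j = n%:Z + 1 by apply: Pstep => //; apply: IH'; lia.
  lia.
case=> [n|n] [jm jN]; first exact: (upto n).
by apply: Phist.
Qed.

Lemma valid_idx_lag (n : nat) : n%:R <= m%:R * Tf / sigma ->
  valid_idx m sigma Tf (n%:Z - m%:Z).
Proof. by move=> hn; split; [lia | apply: le_trans hn; rewrite pmulrn ler_int; lia]. Qed.

Lemma valid_idx_of_step j : step_idx m sigma Tf j -> valid_idx m sigma Tf j.
Proof. by case=> jm jN; split=> //; apply: le_trans jN; rewrite ler_int; lia. Qed.

End TimeIndices.

Section EulerSIR.
Variables (R : realType) (K L m : nat) (sigma Tf b c tau M Tb : R).
Variable F : ('I_K -> 'I_L -> R) -> 'I_K -> 'I_L -> R.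
Variables S I Rc : int -> 'I_K -> 'I_L -> R.

Let total j k l := S j k l + I j k l + Rc j k l.
Let nonneg j := forall k l, [/\ 0 <= S j k l, 0 <= I j k l & 0 <= Rc j k l].

Hypothesis scheme : forall n : nat, n%:R <= m%:R * Tf / sigma -> forall k l,
  [/\ S (n%:Z + 1) k l = S n k l - tau * (S n k l * F (I (n%:Z - m%:Z)) k l)
                         - c * tau * S n k l,
      I (n%:Z + 1) k l = I n k l + tau * (S n k l * F (I (n%:Z - m%:Z)) k l)
                         - b * tau * I n k l &
      Rc (n%:Z + 1) k l = Rc n k l + b * tau * I n k l + c * tau * S n k l].

Hypothesis history_total : forall n n' : int, (- (m%:Z) <= n)%R -> (n <= 0)%R ->
  (- (m%:Z) <= n')%R -> (n' <= 0)%R -> forall k l, total n k l = total n' k l.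

Lemma scheme_total_conserved j : valid_idx m sigma Tf j ->
  forall k l, total j k l = total 0 k l.
Proof.
move: j; apply: valid_idx_ind => [j jm j0 k l|n hn IH k l].
  by apply: history_total; rewrite ?oppr_le0.
rewrite -(IH n) //; last lia.
by rewrite /total; have [-> -> ->] := scheme hn k l; ring.
Qed.

Hypotheses (tau0 : 0 <= tau) (b0 : 0 <= b) (c0 : 0 <= c).
Hypotheses (tauTc : tau * (Tb + c) <= 1) (taub : tau * b <= 1).
Hypothesis F_bounds : forall f, (forall k l, 0 <= f k l <= M) ->
  forall k l, 0 <= F f k l <= Tb.
Hypothesis history_nonneg : forall j : int,
  (- (m%:Z) <= j)%R -> (j <= 0)%R -> nonneg j.
Hypothesis total0_le : forall k l, total 0 k l <= M.

Lemma force_bounds j : valid_idx m sigma Tf j -> nonneg j ->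
  forall k l, 0 <= F (I j) k l <= Tb.
Proof.
move=> jv j0; apply: F_bounds => k l; have [S0 I0 R0] := j0 k l.
rewrite I0 /=; apply: le_trans (total0_le k l).
rewrite -(scheme_total_conserved jv) /total; lra.
Qed.

Lemma scheme_nonneg j : valid_idx m sigma Tf j -> nonneg j.
Proof.
move: j; apply: valid_idx_ind => [|n hn IH k l]; first exact: history_nonneg.
have now : nonneg n by apply: IH; lia.
have [Sn In Rn] := now k l.
have lag0 : nonneg (n%:Z - m%:Z) by apply: IH; lia.
have /andP[T0 TTb] := force_bounds (valid_idx_lag hn) lag0 k l.
have [-> -> ->] := scheme hn k l.
exact: euler_step_nonneg tau0 b0 c0 T0 Sn In TTb tauTc taub Rn.
Qed.

Hypothesis history_S_noninc : forall j : int, (- (m%:Z) <= j)%R -> (j < 0)%R ->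
  forall k l, S (j + 1) k l <= S j k l.
Hypothesis history_R_nondecr : forall j : int, (- (m%:Z) <= j)%R -> (j < 0)%R ->
  forall k l, Rc j k l <= Rc (j + 1) k l.

Lemma scheme_monotone j : step_idx m sigma Tf j ->
  forall k l, S (j + 1) k l <= S j k l /\ Rc j k l <= Rc (j + 1) k l.
Proof.
case: j => [n|n] [jm jN] k l; last first.
  by split; [apply: history_S_noninc | apply: history_R_nondecr].
have [Sn In _] := scheme_nonneg (valid_idx_of_step (conj jm jN)) k l.
have lag0 := scheme_nonneg (valid_idx_lag jN).
have /andP[T0 _] := force_bounds (valid_idx_lag jN) lag0 k l.
have [-> _ ->] := scheme jN k l.
exact: euler_step_monotone.
Qed.

End EulerSIR.

Theorem theorem5 (R : realType)
  (A B b c sigma delta Tf hx hy : R) (K L p m : nat)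
  (W : R -> R -> R) (w eta xi : 'I_p -> R)
  (interp : ('I_K -> 'I_L -> R) -> R -> R -> R)
  (S0 I0 R0 : R -> R -> R -> R)
  (S I Rc : int -> 'I_K -> 'I_L -> R) :
  0 < A -> 0 < B -> 0 < b -> 0 < c -> 0 < sigma -> 0 < delta -> 0 < Tf ->
  0 < hx -> 0 < hy -> (K%:R - 1) * hx = A -> (L%:R - 1) * hy = B ->
  (0 < m)%N ->
  (* W continuous, bounded, non-negative *)
  continuous (fun z : R * R => W z.1 z.2) ->
  (exists C : R, forall x y, W x y <= C) ->
  (forall x y, 0 <= W x y) ->
  (* cubature points in the open disc of radius delta, positive weights *)
  (forall i, eta i ^+ 2 + xi i ^+ 2 < delta ^+ 2) ->
  (forall i, 0 < w i) ->
  (* the interpolation maps non-negative grid data into [0, max data] *)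
  (forall f : 'I_K -> 'I_L -> R, (forall k l, 0 <= f k l) ->
     forall x y, 0 <= interp f x y /\ interp f x y <= gridmax f) ->
  (* history values on the grids *)
  (forall n : int, (- (m%:Z) <= n)%R -> (n <= 0)%R -> forall k l,
     [/\ S n k l = S0 (n%:~R * sigma / m%:R) (gx hx k) (gy hy l),
         I n k l = I0 (n%:~R * sigma / m%:R) (gx hx k) (gy hy l) &
         Rc n k l = R0 (n%:~R * sigma / m%:R) (gx hx k) (gy hy l)]) ->
  (* history satisfies D1 - D4 *)
  (forall n : int, (- (m%:Z) <= n)%R -> (n <= 0)%R -> forall k l,
     [/\ 0 <= S n k l, 0 <= I n k l & 0 <= Rc n k l]) ->
  (forall n n' : int, (- (m%:Z) <= n)%R -> (n <= 0)%R ->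
     (- (m%:Z) <= n')%R -> (n' <= 0)%R -> forall k l,
     S n k l + I n k l + Rc n k l = S n' k l + I n' k l + Rc n' k l) ->
  (forall n : int, (- (m%:Z) <= n)%R -> (n < 0)%R -> forall k l,
     S (n + 1) k l <= S n k l) ->
  (forall n : int, (- (m%:Z) <= n)%R -> (n < 0)%R -> forall k l,
     Rc n k l <= Rc (n + 1) k l) ->
  (* explicit Euler scheme, tau = sigma / m, for 0 <= n <= m Tf / sigma *)
  (forall n : nat, n%:R <= m%:R * Tf / sigma -> forall k l,
     let tau := sigma / m%:R in
     let Tn := Tmat hx hy w eta xi W interp (I (n%:Z - m%:Z)) k l in
     [/\ S (n%:Z + 1) k l = S n k l - tau * (S n k l * Tn) - c * tau * S n k l,
         I (n%:Z + 1) k l = I n k l + tau * (S n k l * Tn) - b * tau * I n k l &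
         Rc (n%:Z + 1) k l = Rc n k l + b * tau * I n k l + c * tau * S n k l]) ->
  (* D2 without restriction on tau *)
  (forall n n' : int, valid_idx m sigma Tf n -> valid_idx m sigma Tf n' ->
     forall k l, S n k l + I n k l + Rc n k l = S n' k l + I n' k l + Rc n' k l)
  /\
  (* D1, D3, D4 under the step-size restriction *)
  (let tau := sigma / m%:R in
   let M := Mmax K L hx hy S0 I0 R0 in
   let Tb := Tbar K L hx hy w eta xi W M in
   tau <= 1 / (Tb + c) -> tau <= 1 / b ->
   (forall n : int, valid_idx m sigma Tf n -> forall k l,
      [/\ 0 <= S n k l, 0 <= I n k l & 0 <= Rc n k l]) /\
   (forall n : int, step_idx m sigma Tf n -> forall k l,
      S (n + 1) k l <= S n k l /\ Rc n k l <= Rc (n + 1) k l)).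
Proof.
move=> _ _ b_gt0 c_gt0 sigma_gt0 _ _ _ _ _ _ _ _ _ W_ge0 _ w_gt0 interp_bd
  hist hist_nonneg hist_total hist_S hist_R scheme.
have conserved := scheme_total_conserved scheme hist_total.
split=> [n n' nv n'v k l|tau M Tb tau_le1 tau_le2]; first by rewrite !conserved.
have tau0 : 0 <= tau by rewrite divr_ge0 ?ler0n ?ltW.
have M0 : 0 <= M by apply: gridmax_ge0.
have Tb0 : 0 <= Tb by apply: gridmax_ge0.
have tauTc : tau * (Tb + c) <= 1.
  by move: tau_le1; rewrite ler_pdivlMr ?mul1r //; lra.
have taub : tau * b <= 1 by move: tau_le2; rewrite ler_pdivlMr ?mul1r.
have F_bd f : (forall k l, 0 <= f k l <= M) ->
    forall k l, 0 <= Tmat hx hy w eta xi W interp f k l <= Tb.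
  move=> fM k l; rewrite Tmat_le_Tbar ?Tmat_ge0 // => k' l'.
  by case/andP: (fM k' l').
have total0_le k l : S 0 k l + I 0 k l + Rc 0 k l <= M.
  have [-> -> ->] := hist 0 (oppr_le0 _) (lexx _) k l.
  by rewrite mul0r mul0r; apply: (le_gridmax (fun (k : 'I_K) (l : 'I_L) =>
    S0 0 (gx hx k) (gy hy l) + I0 0 (gx hx k) (gy hy l) + R0 0 (gx hx k) (gy hy l))).
split.
  exact: scheme_nonneg scheme hist_total tau0 (ltW b_gt0) (ltW c_gt0)
    tauTc taub F_bd hist_nonneg total0_le.
exact: scheme_monotone scheme hist_total tau0 (ltW b_gt0) (ltW c_gt0)
  tauTc taub F_bd hist_nonneg total0_le hist_S hist_R.
Qed.
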